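(* Let $\Psi_n$ be a real $K\times K$ matrix and $c\in(0,1)$. For every integer $s$ with $1\le s\le K/2$ and every $1<p\le2$, $$\kappa_{p,J}\ge C(p)\,s^{-1/p}\,\kappa_{\rm RE}(2s)\qquad\text{for all }J\subseteq\{1,\dots,K\}\text{ with }|J|\le s,$$ where $C(p)=2^{-1/p-1/2}(1-c)\Big(1+\frac{1+c}{1-c}(p-1)^{-1/p}\Big)^{-1}$.
   Context: $\Delta_J$ zeroes coordinates outside $J$, $J^c$ complement. $C_J=\{\Delta\in\mathbb R^K:|\Delta_{J^c}|_1\le\frac{1+c}{1-c}|\Delta_J|_1\}$; $\kappa_{p,J}=\inf\{|\Psi_n\Delta|_\infty:\Delta\in C_J,|\Delta|_p=1\}$. $\kappa_{{\rm RE},J}=\inf_{\Delta\in C_J\setminus\{0\}}\frac{|\Delta^T\Psi_n\Delta|}{|\Delta_J|_2^2}$ (ratio with zero denominator is $+\infty$) and $\kappa_{\rm RE}(m)=\min_{|J|\le m}\kappa_{{\rm RE},J}$. *)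

From Stdlib Require Import Reals Lra.
Open Scope R_scope.

(* Conventions: K is the dimension; indices are 0..K-1 (the paper's 1..K shifted).
   Vectors in R^K are functions nat -> R (entries at indices >= K are ignored);
   a K x K matrix is a function nat -> nat -> R (entries outside range ignored);
   a subset J of {0..K-1} is a boolean predicate J : nat -> bool (only i < K matter). *)

Fixpoint rsum (n : nat) (f : nat -> R) : R :=
  match n with O => 0 | S m => rsum m f + f m end.

Fixpoint card (n : nat) (J : nat -> bool) : nat :=
  match n with O => O | S m => (card m J + (if J m then 1 else 0))%nat end.

(* x^y for x >= 0 (with 0^y = 0), y > 0 *)
Definition rpow (x y : R) : R := if Rlt_dec 0 x then Rpower x y else 0.

Definition norm1 (K : nat) (x : nat -> R) : R := rsum K (fun i => Rabs (x i)).
Definition normp (K : nat) (p : R) (x : nat -> R) : R :=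
  rpow (rsum K (fun i => rpow (Rabs (x i)) p)) (1 / p).
Fixpoint norminf (n : nat) (x : nat -> R) : R :=
  match n with O => 0 | S m => Rmax (norminf m x) (Rabs (x m)) end.
Definition norm2sq (K : nat) (x : nat -> R) : R := rsum K (fun i => x i * x i).

Definition restr (J : nat -> bool) (x : nat -> R) : nat -> R :=
  fun i => if J i then x i else 0.
Definition compl (J : nat -> bool) : nat -> bool := fun i => negb (J i).

Definition mulmv (K : nat) (Psi : nat -> nat -> R) (x : nat -> R) : nat -> R :=
  fun i => rsum K (fun j => Psi i j * x j).
Definition quad (K : nat) (Psi : nat -> nat -> R) (x : nat -> R) : R :=
  rsum K (fun i => x i * mulmv K Psi x i).

Definition inCone (K : nat) (c : R) (J : nat -> bool) (x : nat -> R) : Prop :=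
  norm1 K (restr (compl J) x) <= (1 + c) / (1 - c) * norm1 K (restr J x).

Definition nonzero (K : nat) (x : nat -> R) : Prop := exists i, (i < K)%nat /\ x i <> 0.

Definition is_inf (S : R -> Prop) (m : R) : Prop :=
  (forall x, S x -> m <= x) /\ (forall b, (forall x, S x -> b <= x) -> b <= m).

Definition kappa_p_set (K : nat) (Psi : nat -> nat -> R) (c p : R) (J : nat -> bool)
  : R -> Prop :=
  fun v => exists x, inCone K c J x /\ normp K p x = 1 /\ v = norminf K (mulmv K Psi x).

(* the set of finite values of the ratio defining kappa_{RE,J}
   (ratios with zero denominator are +infinity and do not affect the infimum) *)
Definition kappa_RE_J_set (K : nat) (Psi : nat -> nat -> R) (c : R) (J : nat -> bool)
  : R -> Prop :=
  fun v => exists x, inCone K c J x /\ nonzero K x /\ norm2sq K (restr J x) <> 0 /\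
    v = Rabs (quad K Psi x) / norm2sq K (restr J x).

(* k = kappa_RE(m) = min_{|J| <= m} kappa_{RE,J}  (the minimum is attained at a J0
   with finite kappa_{RE,J0} = k, and k is below every finite kappa_{RE,J}) *)
Definition is_kappa_RE (K : nat) (Psi : nat -> nat -> R) (c : R) (m : nat) (k : R) : Prop :=
  (exists J0, (card K J0 <= m)%nat /\ is_inf (kappa_RE_J_set K Psi c J0) k) /\
  (forall J k', (card K J <= m)%nat -> is_inf (kappa_RE_J_set K Psi c J) k' -> k <= k').

Definition Cconst (c p : R) : R :=
  Rpower 2 (- (1 / p) - 1 / 2) * (1 - c) *
  / (1 + (1 + c) / (1 - c) * Rpower (p - 1) (- (1 / p))).

(* Let x lie in the cone C_J with |x|_p = 1 and put L = |x_{J^c}|_1.  At most s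
   coordinates off J exceed L/s, so adjoining them to J gives a support T with |T| <= 2s,
   and x still lies in C_T.  Hence kappa_RE(2s) |x_T|_2^2 <= |x' Psi x| <= |x|_1 |Psi x|_oo,
   where |x|_1 <= (1 + a) |x_J|_1 <= (1 + a) sqrt(s) |x_T|_2 with a = (1+c)/(1-c).
   On the other hand 1 = sum |x_i|^p: on T, concavity of t -> t^(p/2) bounds the sum by
   |T|^(1-p/2) |x_T|_2^p, and off T each |x_i| <= L/s bounds it by (L/s)^(p-1) L.  Since
   L <= a sqrt(s) |x_T|_2, this forces |x_T|_2 >= (2s)^(1/2-1/p) / (1 + a), and the two
   inequalities combine to |Psi x|_oo >= C(p) s^(-1/p) kappa_RE(2s). *)

From Pilot Require Import Defs.
From Stdlib Require Import Reals Lra Lia Psatz.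
Open Scope R_scope.

Lemma rsum_ext n f g : (forall i, (i < n)%nat -> f i = g i) -> rsum n f = rsum n g.
Proof.
induction n as [|n IH]; intros Hfg; simpl; [reflexivity|].
rewrite IH, Hfg; auto; intros; apply Hfg; lia.
Qed.

Lemma rsum_le n f g : (forall i, (i < n)%nat -> f i <= g i) -> rsum n f <= rsum n g.
Proof.
induction n as [|n IH]; intros Hfg; simpl; [lra|].
apply Rplus_le_compat; [apply IH; intros; apply Hfg; lia | apply Hfg; lia].
Qed.

Lemma rsum_plus n f g : rsum n (fun i => f i + g i) = rsum n f + rsum n g.
Proof. induction n as [|n IH]; simpl; [ring|rewrite IH; ring]. Qed.

Lemma rsum_scal n k f : rsum n (fun i => k * f i) = k * rsum n f.
Proof. induction n as [|n IH]; simpl; [ring|rewrite IH; ring]. Qed.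

Lemma rsum_const0 n : rsum n (fun _ => 0) = 0.
Proof. induction n as [|n IH]; simpl; lra. Qed.

Lemma rsum_nonneg n f : (forall i, (i < n)%nat -> 0 <= f i) -> 0 <= rsum n f.
Proof. intros Hf; rewrite <- (rsum_const0 n); apply rsum_le; exact Hf. Qed.

Lemma rsum_term_le n f i :
  (forall j, (j < n)%nat -> 0 <= f j) -> (i < n)%nat -> f i <= rsum n f.
Proof.
induction n as [|n IH]; intros Hf Hi; simpl; [lia|].
assert (Hn : 0 <= f n) by (apply Hf; lia).
destruct (Nat.eq_dec i n) as [->|Hin].
- assert (0 <= rsum n f) by (apply rsum_nonneg; intros; apply Hf; lia); lra.
- assert (f i <= rsum n f) by (apply IH; [intros; apply Hf|]; lia); lra.
Qed.

Lemma rsum_abs_le n f : Rabs (rsum n f) <= rsum n (fun i => Rabs (f i)).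
Proof.
induction n as [|n IH]; simpl; [rewrite Rabs_R0; lra|].
eapply Rle_trans; [apply Rabs_triang|lra].
Qed.

Lemma rsum_neq0 n f : rsum n f <> 0 -> exists i, (i < n)%nat /\ f i <> 0.
Proof.
induction n as [|n IH]; simpl; intros Hs; [lra|].
destruct (Req_dec (f n) 0) as [E|E].
- destruct IH as [i [Hi Hfi]]; [lra|]. exists i; split; [lia|exact Hfi].
- exists n; split; [lia|exact E].
Qed.

Lemma rsum_indicator n (J : nat -> bool) :
  rsum n (fun i => if J i then 1 else 0) = INR (card n J).
Proof.
induction n as [|n IH]; simpl; [reflexivity|].
rewrite IH, plus_INR; destruct (J n); simpl; lra.
Qed.

Lemma card_orb n (J T : nat -> bool) :
  (card n (fun i => orb (J i) (T i)) <= card n J + card n T)%nat.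
Proof. induction n as [|n IH]; simpl; [lia|destruct (J n), (T n); simpl; lia]. Qed.

Lemma card_eq0 n (J : nat -> bool) :
  (forall i, (i < n)%nat -> J i = false) -> card n J = 0%nat.
Proof.
induction n as [|n IH]; intros HJ; simpl; [reflexivity|].
rewrite IH, HJ; auto; intros; apply HJ; lia.
Qed.

Lemma card_pos n (J : nat -> bool) i : (i < n)%nat -> J i = true -> (1 <= card n J)%nat.
Proof.
intros Hi HJ. apply INR_le. rewrite <- rsum_indicator; simpl.
apply (rsum_term_le n (fun i => if J i then 1 else 0) i) in Hi;
  [rewrite HJ in Hi; exact Hi|intros j _; destruct (J j); lra].
Qed.

Definition Rltb (x y : R) : bool := if Rlt_dec x y then true else false.

Lemma card_Rltb_sum_le n (s : nat) f : (forall i, (i < n)%nat -> 0 <= f i) ->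
  (card n (fun i => Rltb (rsum n f) (INR s * f i)) <= s)%nat.
Proof.
intros Hf. set (L := rsum n f).
assert (HL : 0 <= L) by (apply rsum_nonneg; exact Hf).
destruct HL as [HL|HL].
- assert (Hcount : INR (card n (fun i => Rltb L (INR s * f i))) * L <= INR s * L).
  { rewrite <- rsum_indicator, Rmult_comm, <- rsum_scal.
    unfold L at 3; rewrite <- rsum_scal; apply rsum_le; intros i Hi.
    assert (0 <= INR s * f i) by (apply Rmult_le_pos; [apply pos_INR|auto]).
    unfold Rltb; destruct (Rlt_dec L (INR s * f i)); lra. }
  apply INR_le; nra.
- rewrite card_eq0; [lia|]. intros i Hi; unfold Rltb.
  destruct (Rlt_dec L (INR s * f i)) as [Hlt|]; [exfalso|reflexivity].
  assert (f i <= L) by (apply rsum_term_le; auto).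
  assert (0 <= f i) by auto. rewrite <- HL in *.
  assert (f i = 0) by lra. nra.
Qed.

Lemma Rpower_pos x y : 0 < Rpower x y.
Proof. apply exp_pos. Qed.

Lemma Rpower_1_l z : Rpower 1 z = 1.
Proof. unfold Rpower; rewrite ln_1, Rmult_0_r; apply exp_0. Qed.

Lemma Rpower_ge1 x z : 1 <= x -> 0 <= z -> 1 <= Rpower x z.
Proof. intros; rewrite <- (Rpower_1_l z); apply Rle_Rpower_l; lra. Qed.

Lemma Rpower_div x y z : 0 < x -> 0 < y -> Rpower (x / y) z = Rpower x z / Rpower y z.
Proof.
intros Hx Hy; unfold Rpower, Rdiv.
rewrite ln_mult, ln_Rinv, Rmult_plus_distr_l, exp_plus by (try apply Rinv_0_lt_compat; lra).
f_equal; rewrite <- exp_Ropp; f_equal; ring.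
Qed.

Lemma Rpower_add_le a p : 0 < a -> 1 <= p -> 1 + Rpower a p <= Rpower (1 + a) p.
Proof.
intros Ha Hp.
replace p with ((p - 1) + 1) by ring; rewrite !Rpower_plus, !Rpower_1 by lra.
assert (1 <= Rpower (1 + a) (p - 1)) by (apply Rpower_ge1; lra).
assert (Rpower a (p - 1) <= Rpower (1 + a) (p - 1)) by (apply Rle_Rpower_l; lra).
nra.
Qed.

(* Weighted AM-GM, from [1 + u <= exp u] at [u = (1 - th) ln t] and [u = - th ln t]. *)
Lemma Rpower_le_affine t th : 0 < t -> 0 < th <= 1 -> Rpower t th <= th * t + (1 - th).
Proof.
intros Ht Hth; unfold Rpower; set (l := ln t); set (y := exp (th * l)).
assert (0 < y) by apply exp_pos.
assert (E1 : y * exp (- (th * l)) = 1)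
  by (unfold y; rewrite <- exp_plus, Rplus_opp_r; apply exp_0).
assert (E2 : y * exp ((1 - th) * l) = t)
  by (unfold y; rewrite <- exp_plus; replace (th * l + (1 - th) * l) with l by ring;
      apply exp_ln, Ht).
assert (1 + - (th * l) <= exp (- (th * l))) by apply exp_ineq1_le.
assert (1 + (1 - th) * l <= exp ((1 - th) * l)) by apply exp_ineq1_le.
assert (y * (1 - th * l) <= 1) by (rewrite <- E1; apply Rmult_le_compat_l; lra).
assert (y * (1 + (1 - th) * l) <= t) by (rewrite <- E2; apply Rmult_le_compat_l; lra).
nra.
Qed.

Lemma rpow_pos x y : 0 < x -> rpow x y = Rpower x y.
Proof. intros Hx; unfold rpow; destruct (Rlt_dec 0 x); [reflexivity|lra]. Qed.

Lemma rpow_0 y : rpow 0 y = 0.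
Proof. unfold rpow; destruct (Rlt_dec 0 0); [lra|reflexivity]. Qed.

Lemma rpow_nonneg x y : 0 <= rpow x y.
Proof. unfold rpow; destruct (Rlt_dec 0 x); [apply Rlt_le, Rpower_pos|lra]. Qed.

Lemma rpow_abs_le_affine y lam th : 0 < lam -> 0 < th <= 1 ->
  rpow (Rabs y) (2 * th) <= Rpower lam th * (th / lam * (y * y) + (1 - th)).
Proof.
intros Hlam Hth. destruct (Req_dec y 0) as [->|Hy].
- rewrite Rabs_R0, rpow_0; apply Rmult_le_pos; [apply Rlt_le, Rpower_pos|nra].
- assert (Hyy : 0 < y * y) by nra.
  rewrite rpow_pos by (apply Rabs_pos_lt, Hy).
  assert (E : Rpower (Rabs y) (2 * th) = Rpower (y * y) th).
  { rewrite <- Rpower_mult; f_equal.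
    replace 2 with (INR 2) by (simpl; ring).
    rewrite Rpower_pow by (apply Rabs_pos_lt, Hy); simpl.
    rewrite Rmult_1_r, <- Rabs_mult; apply Rabs_pos_eq; lra. }
  rewrite E.
  replace (y * y) with (lam * (y * y / lam)) at 1 by (field; lra).
  rewrite <- Rpower_mult_distr by (try apply Rdiv_lt_0_compat; lra).
  apply Rmult_le_compat_l; [apply Rlt_le, Rpower_pos|].
  replace (th / lam * (y * y)) with (th * (y * y / lam)) by (field; lra).
  apply Rpower_le_affine; [apply Rdiv_lt_0_compat|]; lra.
Qed.

Lemma rpow_le_mul y M p : 0 <= y <= M -> 1 < p -> rpow y p <= rpow M (p - 1) * y.
Proof.
intros [[Hy|<-] HyM] Hp; [|rewrite rpow_0, Rmult_0_r; lra].
rewrite !rpow_pos by lra.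
replace p with ((p - 1) + 1) at 1 by ring; rewrite Rpower_plus, Rpower_1 by lra.
apply Rmult_le_compat_r; [lra|apply Rle_Rpower_l; lra].
Qed.

Lemma norminf_ge n f i : (i < n)%nat -> Rabs (f i) <= norminf n f.
Proof.
induction n as [|n IH]; intros Hi; simpl; [lia|].
destruct (Nat.eq_dec i n) as [->|Hin]; [apply Rmax_r|].
eapply Rle_trans; [apply IH; lia|apply Rmax_l].
Qed.

Lemma norm1_restr_le K (J1 J2 : nat -> bool) x :
  (forall i, J1 i = true -> J2 i = true) -> norm1 K (restr J1 x) <= norm1 K (restr J2 x).
Proof.
intros HJ; apply rsum_le; intros i _; unfold restr.
destruct (J1 i) eqn:E1; [rewrite HJ; auto; lra|rewrite Rabs_R0; apply Rabs_pos].
Qed.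

Lemma norm2sq_restr_le K (J1 J2 : nat -> bool) x :
  (forall i, J1 i = true -> J2 i = true) -> norm2sq K (restr J1 x) <= norm2sq K (restr J2 x).
Proof.
intros HJ; apply rsum_le; intros i _; unfold restr.
destruct (J1 i) eqn:E1; [rewrite HJ; auto; lra|destruct (J2 i); nra].
Qed.

Lemma norm1_restr_compl K J x :
  norm1 K (restr J x) + norm1 K (restr (compl J) x) = norm1 K x.
Proof.
unfold norm1; rewrite <- rsum_plus; apply rsum_ext; intros i _.
unfold restr, compl; destruct (J i); simpl; rewrite Rabs_R0; ring.
Qed.

Lemma cauchy_schwarz_step k A B b : 0 <= k -> 0 <= B -> A ^ 2 <= k * B ->
  (A + b) ^ 2 <= (k + 1) * (B + b * b).
Proof.
intros Hk HB HAB. destruct Hk as [Hk|<-].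
- assert (Hsq : 0 <= k * (B + k * b * b - 2 * A * b))
    by (assert (0 <= (A - k * b) ^ 2) by apply pow2_ge_0; nra).
  assert (0 <= B + k * b * b - 2 * A * b).
  { apply (Rmult_le_reg_l k); lra. }
  nra.
- assert (A = 0) by nra. subst A. nra.
Qed.

Lemma norm1_restr_sqr_le n (J : nat -> bool) x :
  norm1 n (restr J x) ^ 2 <= INR (card n J) * norm2sq n (restr J x).
Proof.
unfold norm1, norm2sq, restr. induction n as [|n IH]; simpl; [lra|].
rewrite plus_INR. destruct (J n); simpl.
- assert (Hsq : Rabs (x n) * Rabs (x n) = x n * x n)
    by (rewrite <- Rabs_mult; apply Rabs_pos_eq; nra).
  rewrite <- Hsq; apply cauchy_schwarz_step; auto using pos_INR.
  apply rsum_nonneg; intros i _; destruct (J i); nra.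
- rewrite Rabs_R0, !Rplus_0_r, Rmult_0_r, Rplus_0_r. exact IH.
Qed.

Lemma card_pos_of_norm2sq K (T : nat -> bool) x :
  0 < norm2sq K (restr T x) -> (1 <= card K T)%nat.
Proof.
intros HD; destruct (rsum_neq0 K (fun i => restr T x i * restr T x i)) as [i [Hi Hx]];
  [unfold norm2sq in HD; lra|].
apply (card_pos K T i Hi); unfold restr in Hx; destruct (T i); [reflexivity|lra].
Qed.

Lemma Rabs_quad_le K Psi x :
  Rabs (quad K Psi x) <= norm1 K x * norminf K (mulmv K Psi x).
Proof.
unfold quad, norm1; rewrite Rmult_comm, <- rsum_scal.
eapply Rle_trans; [apply rsum_abs_le|]; apply rsum_le; intros i Hi.
rewrite Rabs_mult, Rmult_comm; apply Rmult_le_compat_r; [apply Rabs_pos|].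
apply norminf_ge; exact Hi.
Qed.

Lemma normp_eq1 K p x : 0 < p -> normp K p x = 1 ->
  rsum K (fun i => rpow (Rabs (x i)) p) = 1.
Proof.
unfold normp, rpow; set (S := rsum K _); intros Hp.
destruct (Rlt_dec 0 S) as [HS|]; [intros Hn|lra].
rewrite <- (Rpower_1 S) by exact HS.
replace 1 with (1 / p * p) at 1 by (field; lra).
rewrite <- Rpower_mult, Hn; unfold Rpower; rewrite ln_1, Rmult_0_r; apply exp_0.
Qed.

Lemma normp_nonzero K p x : normp K p x = 1 -> Defs.nonzero K x.
Proof.
unfold normp; intros Hn.
destruct (rsum_neq0 K (fun i => rpow (Rabs (x i)) p)) as [i [Hi Hx]].
- intros HS; rewrite HS, rpow_0 in Hn; lra.
- exists i; split; [exact Hi|intros E].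
  apply Hx; rewrite E, Rabs_R0; apply rpow_0.
Qed.

Lemma compl_incl (J T : nat -> bool) :
  (forall i, J i = true -> T i = true) -> forall i, compl T i = true -> compl J i = true.
Proof. unfold compl; intros HJT i; destruct (J i) eqn:EJ; [rewrite HJT|]; auto. Qed.

Lemma inCone_mono K c (J T : nat -> bool) x : 0 < c < 1 ->
  (forall i, J i = true -> T i = true) -> inCone K c J x -> inCone K c T x.
Proof.
intros Hc HJT HJ; unfold inCone in *.
assert (0 <= (1 + c) / (1 - c)) by (apply Rlt_le, Rdiv_lt_0_compat; lra).
assert (norm1 K (restr (compl T) x) <= norm1 K (restr (compl J) x))
  by (apply norm1_restr_le, compl_incl, HJT).
assert (norm1 K (restr J x) <= norm1 K (restr T x)) by (apply norm1_restr_le; exact HJT).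
nra.
Qed.

Lemma norm1_restr_pos K c J x : 0 < c < 1 ->
  inCone K c J x -> Defs.nonzero K x -> 0 < norm1 K (restr J x).
Proof.
intros Hc HJ [i [Hi Hx]]; unfold inCone in HJ.
assert (Hxi : 0 < Rabs (x i)) by (apply Rabs_pos_lt; exact Hx).
assert (Hle : Rabs (x i) <= norm1 K x)
  by (apply (rsum_term_le K (fun i => Rabs (x i))); auto; intros; apply Rabs_pos).
rewrite <- (norm1_restr_compl K J x) in Hle.
assert (0 <= norm1 K (restr (compl J) x))
  by (apply rsum_nonneg; intros; apply Rabs_pos).
assert (0 < (1 + c) / (1 - c)) by (apply Rdiv_lt_0_compat; lra).
nra.
Qed.

Lemma is_inf_exists (S : R -> Prop) :
  (exists x, S x) -> (exists b, forall x, S x -> b <= x) -> exists m, is_inf S m.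
Proof.
intros [x0 Hx0] [b0 Hb0].
destruct (completeness (fun y => S (- y))) as [l [Hub Hlub]].
- exists (- b0); intros y Hy; apply Hb0 in Hy; lra.
- exists (- x0); rewrite Ropp_involutive; exact Hx0.
- exists (- l); split.
  + intros x Hx. assert (- x <= l) by (apply Hub; rewrite Ropp_involutive; exact Hx). lra.
  + intros b Hb. assert (l <= - b) by (apply Hlub; intros y Hy; apply Hb in Hy; lra). lra.
Qed.

Lemma kappa_RE_J_set_nonneg K Psi c J v : kappa_RE_J_set K Psi c J v -> 0 <= v.
Proof.
intros [x [_ [_ [HD ->]]]].
assert (0 <= norm2sq K (restr J x)) by (apply rsum_nonneg; intros; nra).
apply Rmult_le_pos; [apply Rabs_pos|apply Rlt_le, Rinv_0_lt_compat; lra].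
Qed.

Lemma is_kappa_RE_nonneg K Psi c m k : is_kappa_RE K Psi c m k -> 0 <= k.
Proof.
intros [[J0 [_ [_ Hinf]]] _]; apply Hinf; apply kappa_RE_J_set_nonneg.
Qed.

Lemma is_kappa_RE_le K Psi c m k (T : nat -> bool) x :
  is_kappa_RE K Psi c m k -> (card K T <= m)%nat -> inCone K c T x -> Defs.nonzero K x ->
  0 < norm2sq K (restr T x) -> k * norm2sq K (restr T x) <= Rabs (quad K Psi x).
Proof.
intros [_ Hmin] HT Hcone Hx HD.
assert (Hv : kappa_RE_J_set K Psi c T (Rabs (quad K Psi x) / norm2sq K (restr T x)))
  by (exists x; repeat split; auto; lra).
destruct (is_inf_exists (kappa_RE_J_set K Psi c T)) as [kT HkT];
  [eexists; exact Hv|exists 0; apply kappa_RE_J_set_nonneg|].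
assert (Hk : k <= Rabs (quad K Psi x) / norm2sq K (restr T x))
  by (apply Rle_trans with kT; [eapply Hmin; eauto|apply HkT, Hv]).
apply (Rmult_le_compat_r (norm2sq K (restr T x))) in Hk; [|lra].
unfold Rdiv in Hk; rewrite Rmult_assoc, Rinv_l, Rmult_1_r in Hk; lra.
Qed.

Lemma rsum_rpow_restr_compl K (T : nat -> bool) p x :
  rsum K (fun i => rpow (Rabs (x i)) p) =
  rsum K (fun i => rpow (Rabs (restr T x i)) p) +
  rsum K (fun i => rpow (Rabs (restr (compl T) x i)) p).
Proof.
rewrite <- rsum_plus; apply rsum_ext; intros i _.
unfold restr, compl; destruct (T i); simpl; rewrite Rabs_R0, rpow_0; ring.
Qed.

Lemma rsum_rpow_restr_le K (T : nat -> bool) p x :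
  0 < p <= 2 -> 0 < norm2sq K (restr T x) ->
  rsum K (fun i => rpow (Rabs (restr T x i)) p) <=
  INR (card K T) * Rpower (norm2sq K (restr T x) / INR (card K T)) (p / 2).
Proof.
intros Hp HD. set (D := norm2sq K (restr T x)) in *. set (m := INR (card K T)).
assert (Hm : 1 <= m)
  by (unfold m; change 1 with (INR 1); apply le_INR, (card_pos_of_norm2sq K T x HD)).
set (lam := D / m). assert (Hlam : 0 < lam) by (apply Rdiv_lt_0_compat; lra).
set (th := p / 2). assert (Hth : 0 < th <= 1) by (unfold th; lra).
apply Rle_trans with (rsum K (fun i => Rpower lam th *
  (th / lam * (restr T x i * restr T x i) + (1 - th) * (if T i then 1 else 0)))).
- apply rsum_le; intros i _. replace p with (2 * th) by (unfold th; lra).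
  unfold restr; destruct (T i).
  + rewrite Rmult_1_r; apply rpow_abs_le_affine; assumption.
  + rewrite Rabs_R0, rpow_0, Rmult_0_l, !Rmult_0_r, Rplus_0_r; right; ring.
- rewrite rsum_scal, rsum_plus, !rsum_scal, rsum_indicator; fold D m.
  change (rsum K (fun i => restr T x i * restr T x i)) with D.
  right; unfold lam; field; lra.
Qed.

Lemma rsum_rpow_le_norm1 K p M x : 1 < p -> (forall i, (i < K)%nat -> Rabs (x i) <= M) ->
  rsum K (fun i => rpow (Rabs (x i)) p) <= rpow M (p - 1) * norm1 K x.
Proof.
intros Hp HM; unfold norm1; rewrite <- rsum_scal; apply rsum_le; intros i Hi.
apply rpow_le_mul; [split; [apply Rabs_pos|apply HM, Hi]|exact Hp].
Qed.

Lemma unit_power_mass_le K p (T : nat -> bool) M x : 1 < p <= 2 -> normp K p x = 1 ->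
  0 < norm2sq K (restr T x) -> (forall i, (i < K)%nat -> Rabs (restr (compl T) x i) <= M) ->
  1 <= INR (card K T) * Rpower (norm2sq K (restr T x) / INR (card K T)) (p / 2) +
       rpow M (p - 1) * norm1 K (restr (compl T) x).
Proof.
intros Hp Hnorm HD HM.
rewrite <- (normp_eq1 K p x ltac:(lra) Hnorm) at 1; rewrite (rsum_rpow_restr_compl K T).
apply Rplus_le_compat; [apply rsum_rpow_restr_le; [lra|exact HD]|].
apply rsum_rpow_le_norm1; [lra|exact HM].
Qed.

Definition large_support K (s : nat) (J : nat -> bool) (x : nat -> R) : nat -> bool :=
  fun i => orb (J i) (Rltb (norm1 K (restr (compl J) x)) (INR s * Rabs (restr (compl J) x i))).

Lemma large_support_incl K s J x i : J i = true -> large_support K s J x i = true.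
Proof. intros HJ; unfold large_support; rewrite HJ; reflexivity. Qed.

Lemma card_large_support K s J x : (card K (large_support K s J x) <= card K J + s)%nat.
Proof.
pose proof (card_Rltb_sum_le K s _ (fun i _ => Rabs_pos (restr (compl J) x i))).
pose proof (card_orb K J (fun i =>
  Rltb (norm1 K (restr (compl J) x)) (INR s * Rabs (restr (compl J) x i)))).
unfold large_support, norm1 in *; lia.
Qed.

Lemma large_support_compl_le K s J x i : (1 <= s)%nat ->
  Rabs (restr (compl (large_support K s J x)) x i) <= norm1 K (restr (compl J) x) / INR s.
Proof.
intros Hs; set (L := norm1 K (restr (compl J) x)).
assert (Hu : 0 < INR s) by (apply lt_0_INR; lia).
assert (HLu : 0 <= L / INR s)
  by (apply Rmult_le_pos; [apply rsum_nonneg; intros; apply Rabs_pos|];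
      apply Rlt_le, Rinv_0_lt_compat, Hu).
unfold large_support; fold L; unfold restr, compl, Rltb.
destruct (J i); simpl; [rewrite Rabs_R0; exact HLu|].
destruct (Rlt_dec L (INR s * Rabs (x i))); simpl; [rewrite Rabs_R0; exact HLu|].
apply (Rmult_le_reg_l (INR s)); [exact Hu|].
replace (INR s * (L / INR s)) with L by (field; lra); lra.
Qed.

Lemma mul_Rpower_div_le m u D th : 0 < D -> 1 <= m <= 2 * u -> 0 <= th <= 1 ->
  m * Rpower (D / m) th <= Rpower (2 * u) (1 - th) * Rpower D th.
Proof.
intros HD Hm Hth.
rewrite Rpower_div by lra.
rewrite <- (Rpower_1 m) at 1 by lra.
replace 1 with ((1 - th) + th) at 1 by ring; rewrite Rpower_plus.
assert (0 < Rpower m th) by apply Rpower_pos.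
replace (Rpower m (1 - th) * Rpower m th * (Rpower D th / Rpower m th))
  with (Rpower m (1 - th) * Rpower D th) by (field; lra).
apply Rmult_le_compat_r; [apply Rlt_le, Rpower_pos|apply Rle_Rpower_l; lra].
Qed.

Lemma rpow_div_mul_le L a u D p : 1 <= u -> 0 < D -> 0 < a -> 1 < p ->
  0 <= L <= a * sqrt (u * D) ->
  rpow (L / u) (p - 1) * L <= Rpower a p * Rpower u (1 - p / 2) * Rpower D (p / 2).
Proof.
intros Hu HD Ha Hp [[HL|<-] HLB];
  [|rewrite Rmult_0_r; apply Rmult_le_pos; [apply Rmult_le_pos|]; apply Rlt_le, Rpower_pos].
set (B := a * sqrt (u * D)) in HLB |- *.
assert (HB : 0 < B) by (apply Rmult_lt_0_compat; [|apply sqrt_lt_R0]; nra).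
rewrite rpow_pos by (apply Rdiv_lt_0_compat; lra).
apply Rle_trans with (Rpower (B / u) (p - 1) * B).
- apply Rmult_le_compat; [apply Rlt_le, Rpower_pos|lra| |lra].
  apply Rle_Rpower_l; [lra|]; split; [apply Rdiv_lt_0_compat; lra|].
  apply Rmult_le_compat_r; [apply Rlt_le, Rinv_0_lt_compat|]; lra.
- assert (EB : Rpower B p = Rpower a p * (Rpower u (p / 2) * Rpower D (p / 2))).
  { unfold B; rewrite <- Rpower_sqrt, <- !Rpower_mult_distr, Rpower_mult
      by (try apply Rpower_pos; nra).
    rewrite Rpower_mult; replace (/ 2 * p) with (p / 2) by lra; reflexivity. }
  assert (EBp : Rpower B (p - 1) * B = Rpower B p).
  { rewrite <- (Rpower_1 B) at 2 by lra; rewrite <- Rpower_plus; f_equal; lra. }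
  assert (Eu : Rpower u (p / 2) = Rpower u (1 - p / 2) * Rpower u (p - 1)).
  { rewrite <- Rpower_plus; f_equal; lra. }
  assert (0 < Rpower u (p - 1)) by apply Rpower_pos.
  rewrite Rpower_div by lra.
  replace (Rpower B (p - 1) / Rpower u (p - 1) * B)
    with (Rpower B (p - 1) * B / Rpower u (p - 1)) by (field; lra).
  rewrite EBp, EB, Eu; right; field; lra.
Qed.

Lemma unit_mass_le m u D L a p : 1 <= u -> 1 <= m <= 2 * u -> 0 < D -> 0 < a -> 1 < p <= 2 ->
  0 <= L <= a * sqrt (u * D) ->
  1 <= m * Rpower (D / m) (p / 2) + rpow (L / u) (p - 1) * L ->
  1 <= Rpower (2 * u) (1 - p / 2) * Rpower D (p / 2) * Rpower (1 + a) p.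
Proof.
intros Hu Hm HD Ha Hp HL Hmass.
assert (Hhead := mul_Rpower_div_le m u D (p / 2) HD Hm ltac:(lra)).
assert (Htail := rpow_div_mul_le L a u D p Hu HD Ha ltac:(lra) HL).
set (X := Rpower (2 * u) (1 - p / 2)) in *; set (Y := Rpower D (p / 2)) in *.
assert (0 < Y) by apply Rpower_pos. assert (0 < X) by apply Rpower_pos.
assert (Rpower a p * Rpower u (1 - p / 2) * Y <= Rpower a p * X * Y).
{ apply Rmult_le_compat_r; [lra|]; apply Rmult_le_compat_l; [apply Rlt_le, Rpower_pos|].
  apply Rle_Rpower_l; lra. }
assert (1 + Rpower a p <= Rpower (1 + a) p) by (apply Rpower_add_le; lra).
assert (X * Y * (1 + Rpower a p) <= X * Y * Rpower (1 + a) p)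
  by (apply Rmult_le_compat_l; [nra|lra]).
nra.
Qed.

Lemma sqrt_lower_bound u D a p : 1 <= u -> 0 < D -> 0 < a -> 1 < p ->
  1 <= Rpower (2 * u) (1 - p / 2) * Rpower D (p / 2) * Rpower (1 + a) p ->
  Rpower (2 * u) (1 / 2 - 1 / p) <= sqrt D * (1 + a).
Proof.
intros Hu HD Ha Hp Hmass.
set (w := 2 * u) in *; assert (0 < w) by (unfold w; lra).
assert (Hp' : 0 <= 1 / p) by (apply Rlt_le, Rdiv_lt_0_compat; lra).
apply (fun H => Rle_Rpower_l _ _ (1 / p) Hp' (conj Rlt_0_1 H)) in Hmass.
rewrite Rpower_1_l, <- !Rpower_mult_distr, !Rpower_mult in Hmass
  by (try apply Rmult_lt_0_compat; try apply Rpower_pos; lra).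
replace (p * (1 / p)) with 1 in Hmass by (field; lra).
replace (p / 2 * (1 / p)) with (/ 2) in Hmass by (field; lra).
rewrite Rpower_1, Rpower_sqrt in Hmass by lra.
assert (E : Rpower w (1 / 2 - 1 / p) * Rpower w ((1 - p / 2) * (1 / p)) = 1).
{ rewrite <- Rpower_plus; replace (1 / 2 - 1 / p + (1 - p / 2) * (1 / p)) with 0
    by (field; lra); apply Rpower_O; lra. }
assert (0 < Rpower w (1 / 2 - 1 / p)) by apply Rpower_pos.
apply (Rmult_le_compat_l (Rpower w (1 / 2 - 1 / p))) in Hmass; [|lra].
rewrite !Rmult_assoc in Hmass; rewrite <- (Rmult_assoc _ (Rpower w _)), E in Hmass; lra.
Qed.

(* Only [(p - 1) ^ (- 1 / p) >= 1] is used: the estimate already holds with [1 + a]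
   in place of [1 + a (p - 1) ^ (- 1 / p)]. *)
Lemma Cconst_mul_le c p u D : 0 < c < 1 -> 1 < p <= 2 -> 1 <= u -> 0 < D ->
  Rpower (2 * u) (1 / 2 - 1 / p) <= sqrt D * (1 + (1 + c) / (1 - c)) ->
  Cconst c p * Rpower u (- (1 / p)) * ((1 + (1 + c) / (1 - c)) * sqrt u) <= sqrt D.
Proof.
intros Hc Hp Hu HD Hsq. unfold Cconst.
set (a := (1 + c) / (1 - c)) in *; set (q := Rpower (p - 1) (- (1 / p))).
assert (Ha : 0 < a) by (apply Rdiv_lt_0_compat; lra).
assert (Hq : 1 <= q).
{ unfold q; rewrite Rpower_Ropp; apply Rle_trans with (/ 1); [rewrite Rinv_1; lra|].
  apply Rinv_le_contravar; [apply Rpower_pos|].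
  apply Rle_trans with (Rpower 1 (1 / p)); [|rewrite Rpower_1_l; lra].
  apply Rle_Rpower_l; [apply Rlt_le, Rdiv_lt_0_compat|]; lra. }
assert (E : Rpower 2 (- (1 / p) - 1 / 2) * (1 - c) * / (1 + a * q) * Rpower u (- (1 / p)) *
  ((1 + a) * sqrt u) = Rpower (2 * u) (1 / 2 - 1 / p) / (1 + a * q)).
{ assert (Ec : (1 - c) * (1 + a) = Rpower 2 1) by (rewrite Rpower_1; unfold a; [field|]; lra).
  assert (Eu : Rpower u (- (1 / p)) * sqrt u = Rpower u (1 / 2 - 1 / p)).
  { rewrite <- Rpower_sqrt, <- Rpower_plus by lra; f_equal; field; lra. }
  rewrite <- Rpower_mult_distr by lra.
  replace (1 / 2 - 1 / p) with ((- (1 / p) - 1 / 2) + 1) at 1 by (field; lra).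
  rewrite Rpower_plus, <- Ec, <- Eu; field; nra. }
rewrite E. apply (Rmult_le_reg_r (1 + a * q)); [nra|].
unfold Rdiv; rewrite Rmult_assoc, Rinv_l, Rmult_1_r by nra.
assert (sqrt D * (1 + a) <= sqrt D * (1 + a * q))
  by (apply Rmult_le_compat_l; [apply sqrt_pos|nra]).
lra.
Qed.

Lemma kappa_bound_of_masses c p u m D A L k N :
  0 < c < 1 -> 1 < p <= 2 -> 1 <= u -> 1 <= m <= 2 * u -> 0 < A ->
  0 <= L <= (1 + c) / (1 - c) * A -> A ^ 2 <= u * D -> 0 <= k ->
  1 <= m * Rpower (D / m) (p / 2) + rpow (L / u) (p - 1) * L ->
  k * D <= (A + L) * N ->
  Cconst c p * Rpower u (- (1 / p)) * k <= N.
Proof.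
intros Hc Hp Hu Hm HA HL HAD Hk Hmass HkD.
set (a := (1 + c) / (1 - c)) in *.
assert (Ha : 0 < a) by (apply Rdiv_lt_0_compat; lra).
assert (HD : 0 < D) by nra.
assert (HAsq : A <= sqrt (u * D))
  by (rewrite <- (sqrt_pow2 A) by lra; apply sqrt_le_1_alt; exact HAD).
assert (HLsq : 0 <= L <= a * sqrt (u * D)) by nra.
assert (HG := Cconst_mul_le c p u D Hc Hp Hu HD
  (sqrt_lower_bound u D a p Hu HD Ha ltac:(lra)
    (unit_mass_le m u D L a p Hu Hm HD Ha Hp HLsq Hmass))).
fold a in HG; set (G := Cconst c p * Rpower u (- (1 / p))) in *.
rewrite sqrt_mult in HAsq by lra.
assert (Hsu : 0 < sqrt u) by (apply sqrt_lt_R0; lra).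
assert (HsD : 0 < sqrt D) by (apply sqrt_lt_R0; lra).
assert (EsD : D = sqrt D * sqrt D) by (rewrite sqrt_sqrt; lra).
assert (HN : k * D <= (1 + a) * sqrt u * sqrt D * N).
{ apply Rle_trans with ((A + L) * N); [exact HkD|].
  assert (0 <= N) by (apply Rmult_le_reg_l with (A + L); nra).
  apply Rmult_le_compat_r; nra. }
assert (HGk : G * k * ((1 + a) * sqrt u * sqrt D) <= k * sqrt D * sqrt D).
{ replace (G * k * ((1 + a) * sqrt u * sqrt D))
    with (k * (G * ((1 + a) * sqrt u)) * sqrt D) by ring.
  apply Rmult_le_compat_r; [lra|]; apply Rmult_le_compat_l; lra. }
rewrite (Rmult_assoc k), <- EsD in HGk.
apply (Rmult_le_reg_r ((1 + a) * sqrt u * sqrt D)); [nra|nra].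
Qed.

Lemma kappa_p_set_lower_bound K Psi c s p J x kRE :
  0 < c < 1 -> (1 <= s)%nat -> 1 < p <= 2 -> is_kappa_RE K Psi c (2 * s) kRE ->
  (card K J <= s)%nat -> inCone K c J x -> normp K p x = 1 ->
  Cconst c p * Rpower (INR s) (- (1 / p)) * kRE <= norminf K (mulmv K Psi x).
Proof.
intros Hc Hs Hp HkRE HJ HconeJ Hnorm.
set (A := norm1 K (restr J x)); set (L := norm1 K (restr (compl J) x)); set (u := INR s).
set (T := large_support K s J x).
assert (HJT : forall i, J i = true -> T i = true) by (intros i; apply large_support_incl).
assert (HTcard : (card K T <= 2 * s)%nat)
  by (pose proof (card_large_support K s J x) as Hcard; fold T in Hcard; lia).
set (D := norm2sq K (restr T x)); set (m := INR (card K T)).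
assert (HA : 0 < A)
  by exact (norm1_restr_pos K c J x Hc HconeJ (normp_nonzero K p x Hnorm)).
assert (HAD : A ^ 2 <= u * D).
{ apply Rle_trans with (INR (card K J) * norm2sq K (restr J x));
    [apply norm1_restr_sqr_le|].
  apply Rmult_le_compat; [apply pos_INR|apply rsum_nonneg; intros; nra|apply le_INR, HJ|].
  apply norm2sq_restr_le, HJT. }
assert (Hu : 1 <= u) by (unfold u; change 1 with (INR 1); apply le_INR, Hs).
assert (HD : 0 < D) by nra.
assert (Hm : 1 <= m <= 2 * u).
{ replace (2 * u) with (INR (2 * s)) by (unfold u; rewrite mult_INR; simpl; lra).
  unfold m; change 1 with (INR 1); split; apply le_INR;
    [apply (card_pos_of_norm2sq K T x HD)|exact HTcard]. }
assert (HkD : kRE * D <= (A + L) * norminf K (mulmv K Psi x)).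
{ eapply Rle_trans; [apply (is_kappa_RE_le K Psi c (2 * s))|].
  - exact HkRE.
  - exact HTcard.
  - exact (inCone_mono K c J T x Hc HJT HconeJ).
  - exact (normp_nonzero K p x Hnorm).
  - exact HD.
  - unfold A, L; rewrite norm1_restr_compl; apply Rabs_quad_le. }
assert (Hmass : 1 <= m * Rpower (D / m) (p / 2) + rpow (L / u) (p - 1) * L).
{ eapply Rle_trans;
    [apply (unit_power_mass_le K p T (L / u) x Hp Hnorm HD);
     intros i _; apply large_support_compl_le, Hs|].
  apply Rplus_le_compat_l, Rmult_le_compat_l; [apply rpow_nonneg|].
  apply norm1_restr_le, compl_incl, HJT. }
apply (kappa_bound_of_masses c p u m D A L); try assumption.
- split; [apply rsum_nonneg; intros; apply Rabs_pos|exact HconeJ].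
- exact (is_kappa_RE_nonneg K Psi c (2 * s) kRE HkRE).
Qed.

Theorem proposition5 (K : nat) (Psi : nat -> nat -> R) (c : R) :
  0 < c < 1 ->
  forall (s : nat) (p : R), (1 <= s)%nat -> (2 * s <= K)%nat -> 1 < p <= 2 ->
  forall kRE : R, is_kappa_RE K Psi c (2 * s) kRE ->
  forall J : nat -> bool, (card K J <= s)%nat ->
  forall kp : R, is_inf (kappa_p_set K Psi c p J) kp ->
  kp >= Cconst c p * Rpower (INR s) (- (1 / p)) * kRE.
Proof.
intros Hc s p Hs _ Hp kRE HkRE J HJ kp [_ Hgreatest].
apply Rle_ge, Hgreatest; intros v [x [Hcone [Hnorm ->]]].
exact (kappa_p_set_lower_bound K Psi c s p J x kRE Hc Hs Hp HkRE HJ Hcone Hnorm).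
Qed.
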